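(* $C_{\mathbb N}=C^0_{\mathbb N}=3$.
   Context: $\mathbb N=\{1,2,3,\dots\}$ is regarded as the infinite path graph with edges $\{j,j+1\}$, $j\in\mathbb N$, and graph distance $d(i,j)=|i-j|$. A measure $\mu$ is a weight function $\mu:\mathbb N\to(0,\infty)$, with $\mu(A)=\sum_{v\in A}\mu(v)$. Closed balls are $B(x,r)=\{y:d(x,y)\le r\}$. The doubling constant of $\mu$ is $C_\mu=\sup\{\mu(B(x,2k+1))/\mu(B(x,k)): x\in \mathbb N,\ k\in\{0,1,2,\dots\}\}$, and $\mu$ is doubling if $C_\mu<\infty$. $C_{\mathbb N}=\inf\{C_\mu:\mu\text{ doubling}\}$; $C^0_\mu=\sup_{x}\mu(B(x,1))/\mu(x)$ and $C^0_{\mathbb N}=\inf_\mu C^0_\mu$, the infimum over doubling measures. *)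

From Stdlib Require Import Reals.
From Coquelicot Require Import Coquelicot.
Open Scope R_scope.

(* Points of the path graph N = {1,2,3,...} are naturals v with 1 <= v. *)

(* A measure: a positive weight on every vertex v >= 1 (value at 0 is irrelevant). *)
Definition is_measure (mu : nat -> R) : Prop := forall v : nat, (1 <= v)%nat -> 0 < mu v.

Fixpoint psum (f : nat -> R) (n : nat) : R :=
  match n with
  | O => 0
  | S m => psum f m + f (S m)
  end.

(* mu(B(x,r)) where B(x,r) = {y in N : |x - y| <= r} = {y >= 1 : x - r <= y <= x + r}
   (nat subtraction is truncated, which is harmless since y >= 1 anyway). *)
Definition ball_mass (mu : nat -> R) (x r : nat) : R :=
  psum (fun y => if Nat.leb (x - r) y then mu y else 0) (x + r).

Definition C_mu (mu : nat -> R) : Rbar :=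
  Lub_Rbar (fun c => exists x k : nat, (1 <= x)%nat /\
                       c = ball_mass mu x (2 * k + 1) / ball_mass mu x k).

Definition doubling (mu : nat -> R) : Prop := is_measure mu /\ is_finite (C_mu mu).

Definition C0_mu (mu : nat -> R) : Rbar :=
  Lub_Rbar (fun c => exists x : nat, (1 <= x)%nat /\ c = ball_mass mu x 1 / mu x).

Definition C_N : Rbar :=
  Glb_Rbar (fun c => exists mu, doubling mu /\ Finite c = C_mu mu).

Definition C0_N : Rbar :=
  Glb_Rbar (fun c => exists mu, doubling mu /\ Finite c = C0_mu mu).

(* Upper bound: for the counting measure, B(x,k) has at least min(x+k, 2k+1) points and
   B(x,2k+1) at most x+2k+1 resp. 4k+3, so every ratio is at most 3, with equality at x = 2, k = 0.

   Lower bound: if mu(B(x,1)) <= c mu(x) for all x, the positive sequence a_n = mu(n+1)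
   satisfies a_n + a_(n+2) <= (c-1) a_(n+1).  When c - 1 = 2 - delta with delta > 0, the
   increments a_(n+1) - a_n decrease by at least delta a_(n+1) at every step; this forces
   one of them to become negative, after which a decreases at least linearly and turns
   negative. *)

From Stdlib Require Import Reals Lra Lia Classical.
From Coquelicot Require Import Coquelicot.
Open Scope R_scope.

Lemma steady_decrease_eventually_neg (f : nat -> R) (s : R) :
  0 < s -> (forall n, f (S n) <= f n - s) -> exists n, f n < 0.
Proof.
  intros Hs Hf.
  assert (Hlin : forall n, f n <= f 0%nat - INR n * s).
  { induction n as [|n IH]; [simpl; lra|].
    rewrite S_INR. specialize (Hf n). lra. }
  destruct (INR_unbounded (f 0%nat / s)) as [n Hn].
  assert (f 0%nat < INR n * s).
  { apply Rnot_le_lt. intro Hle. apply Rle_div_r in Hle; lra. }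
  exists n. specialize (Hlin n). lra.
Qed.

Lemma no_positive_sequence_below_two (a : nat -> R) (l : R) :
  l < 2 -> (forall n, 0 < a n) ->
  ~ (forall n, a n + a (S (S n)) <= l * a (S n)).
Proof.
  intros Hl Hpos Ha.
  set (delta := 2 - l).
  set (D n := a (S n) - a n).
  assert (D_step : forall n, D (S n) <= D n - delta * a (S n)).
  { intro n. unfold D, delta. specialize (Ha n). lra. }
  assert (D_decr : forall n, D (S n) <= D n).
  { intro n. specialize (D_step n). specialize (Hpos (S n)).
    assert (0 < delta * a (S n)) by (apply Rmult_lt_0_compat; unfold delta; lra). lra. }
  destruct (classic (exists m, D m < 0)) as [[m Hm] | Hnone].
  - assert (D_tail : forall j, D (m + j)%nat <= D m).
    { induction j as [|j IH]; [rewrite Nat.add_0_r; apply Rle_refl|].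
      rewrite Nat.add_succ_r. specialize (D_decr (m + j)%nat). lra. }
    destruct (steady_decrease_eventually_neg (fun j => a (m + j)%nat) (- D m))
      as [j Hj]; [lra| |].
    + intro j. cbv beta. rewrite Nat.add_succ_r. specialize (D_tail j). unfold D in *. lra.
    + specialize (Hpos (m + j)%nat). lra.
  - assert (D_nonneg : forall n, 0 <= D n).
    { intro n. apply Rnot_lt_le. intro Hn. apply Hnone. now exists n. }
    assert (a_ge : forall n, a 0%nat <= a n).
    { induction n as [|n IH]; [lra|]. specialize (D_nonneg n). unfold D in D_nonneg. lra. }
    destruct (steady_decrease_eventually_neg D (delta * a 0%nat)) as [n Hn].
    + apply Rmult_lt_0_compat; [unfold delta; lra | apply Hpos].
    + intro n. specialize (D_step n). specialize (a_ge (S n)).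
      assert (delta * a 0%nat <= delta * a (S n))
        by (apply Rmult_le_compat_l; unfold delta; lra). lra.
    + specialize (D_nonneg n). lra.
Qed.

Lemma psum_zero_below_cutoff (g : nat -> R) (a n : nat) : (n < a)%nat ->
  psum (fun y => if Nat.leb a y then g y else 0) n = 0.
Proof.
  induction n as [|n IH]; intro Hn; simpl; [reflexivity|].
  rewrite IH by lia.
  destruct (Nat.leb_spec a (S n)); [lia | ring].
Qed.

Lemma ball_mass_0 (mu : nat -> R) (x : nat) : (1 <= x)%nat -> ball_mass mu x 0 = mu x.
Proof.
  intro Hx. unfold ball_mass. rewrite Nat.sub_0_r, Nat.add_0_r.
  destruct x as [|x]; [lia|]. cbn [psum].
  rewrite psum_zero_below_cutoff by lia. rewrite Nat.leb_refl. ring.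
Qed.

Lemma ball_mass_1 (mu : nat -> R) (n : nat) :
  ball_mass mu (S (S n)) 1 = mu (S n) + mu (S (S n)) + mu (S (S (S n))).
Proof.
  unfold ball_mass.
  replace (S (S n) - 1)%nat with (S n) by lia.
  replace (S (S n) + 1)%nat with (S (S (S n))) by lia.
  cbn [psum]. rewrite psum_zero_below_cutoff by lia.
  destruct (Nat.leb_spec (S n) (S n)); [|lia].
  destruct (Nat.leb_spec (S n) (S (S n))); [|lia].
  destruct (Nat.leb_spec (S n) (S (S (S n)))); [|lia].
  ring.
Qed.

Lemma three_le_neighbour_ratio (mu : nat -> R) (c : R) : is_measure mu ->
  (forall x, (1 <= x)%nat -> ball_mass mu x 1 <= c * mu x) -> 3 <= c.
Proof.
  intros Hmu Hc. apply Rnot_lt_le. intro Hlt.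
  apply (no_positive_sequence_below_two (fun n => mu (S n)) (c - 1)); [lra| |].
  - intro n. apply Hmu. lia.
  - intro n. specialize (Hc (S (S n)) ltac:(lia)). rewrite ball_mass_1 in Hc. lra.
Qed.

Lemma Lub_Rbar_finite_ub (E : R -> Prop) (c y : R) : Lub_Rbar E = Finite c -> E y -> y <= c.
Proof.
  intros Hc Ey. destruct (Lub_Rbar_correct E) as [Hub _].
  rewrite Hc in Hub. exact (Hub y Ey).
Qed.

Lemma Lub_Rbar_max (E : R -> Prop) (M : R) :
  E M -> (forall y, E y -> y <= M) -> Lub_Rbar E = Finite M.
Proof.
  intros EM Hub. apply is_lub_Rbar_unique. split.
  - exact Hub.
  - intros b Hb. exact (Hb M EM).
Qed.

Lemma Glb_Rbar_min (E : R -> Prop) (m : R) :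
  E m -> (forall y, E y -> m <= y) -> Glb_Rbar E = Finite m.
Proof.
  intros Em Hlb. apply is_glb_Rbar_unique. split.
  - exact Hlb.
  - intros b Hb. exact (Hb m Em).
Qed.

Lemma three_le_C0_mu (mu : nat -> R) (c : R) : is_measure mu -> C0_mu mu = Finite c -> 3 <= c.
Proof.
  intros Hmu Hc. apply (three_le_neighbour_ratio mu); [exact Hmu|].
  intros x Hx. apply Rle_div_l; [now apply Hmu|].
  apply (Lub_Rbar_finite_ub _ _ _ Hc). now exists x.
Qed.

Lemma three_le_C_mu (mu : nat -> R) (c : R) : is_measure mu -> C_mu mu = Finite c -> 3 <= c.
Proof.
  intros Hmu Hc. apply (three_le_neighbour_ratio mu); [exact Hmu|].
  intros x Hx. apply Rle_div_l; [now apply Hmu|].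
  apply (Lub_Rbar_finite_ub _ _ _ Hc). exists x, 0%nat.
  now rewrite ball_mass_0.
Qed.

Definition counting (v : nat) : R := 1.

Lemma ball_mass_counting (x r : nat) :
  ball_mass counting x r = INR ((x + r + 1) - Nat.max (x - r) 1).
Proof.
  unfold ball_mass, counting. generalize (x + r)%nat as n.
  induction n as [|n IH].
  - cbn [psum]. now replace (0 + 1 - Nat.max (x - r) 1)%nat with 0%nat by lia.
  - cbn [psum]. rewrite IH.
    destruct (Nat.leb_spec (x - r) (S n)).
    + replace (S n + 1 - Nat.max (x - r) 1)%nat
        with (S (n + 1 - Nat.max (x - r) 1)) by lia.
      rewrite S_INR. ring.
    + now replace (S n + 1 - Nat.max (x - r) 1)%nat
        with (n + 1 - Nat.max (x - r) 1)%nat by lia; ring.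
Qed.

Lemma INR_ratio_le_3 (a b : nat) : (1 <= b)%nat -> (a <= 3 * b)%nat -> INR a / INR b <= 3.
Proof.
  intros Hb Hab. apply Rle_div_l; [apply lt_0_INR; lia|].
  apply le_INR in Hab. rewrite mult_INR in Hab. simpl in Hab. lra.
Qed.

Lemma C_mu_counting : C_mu counting = Finite 3.
Proof.
  apply Lub_Rbar_max.
  - exists 2%nat, 0%nat. split; [lia|].
    rewrite !ball_mass_counting. simpl. field.
  - intros y [x [k [Hx ->]]]. rewrite !ball_mass_counting.
    apply INR_ratio_le_3; lia.
Qed.

Lemma C0_mu_counting : C0_mu counting = Finite 3.
Proof.
  apply Lub_Rbar_max.
  - exists 2%nat. split; [lia|].
    rewrite ball_mass_counting. unfold counting. simpl. field.
  - intros y [x [Hx ->]]. rewrite ball_mass_counting.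
    change (counting x) with (INR 1). apply INR_ratio_le_3; lia.
Qed.

Lemma counting_doubling : doubling counting.
Proof.
  split.
  - intros v _. unfold counting. lra.
  - now rewrite C_mu_counting.
Qed.

Theorem theorem4p3 : C_N = Finite 3%R /\ C0_N = Finite 3%R.
Proof.
  split; apply Glb_Rbar_min.
  - exists counting. split; [exact counting_doubling | now rewrite C_mu_counting].
  - intros c [mu [[Hmu _] Hc]]. now apply (three_le_C_mu mu).
  - exists counting. split; [exact counting_doubling | now rewrite C0_mu_counting].
  - intros c [mu [[Hmu _] Hc]]. now apply (three_le_C0_mu mu).
Qed.
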